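(* Let $H$ be an undirected simple graph on a vertex set $V$ with $|V|=n$, and let $\tilde d$ be the average degree of $H$. Let $w$ be chosen uniformly at random from $V$, and let $N_w(H)$ be the graph on vertex set $V$ obtained from $H$ by deleting every edge incident to a vertex of $\Gamma_H(w)$. Then the expected number of edges deleted, $\mathbb{E}\big[|E(H)|-|E(N_w(H))|\big]$, is at least $\binom{\tilde d+1}{2}=\frac{(\tilde d+1)\tilde d}{2}$.
   Context: $\Gamma_H(w)$ denotes the set of neighbours of $w$ in $H$ (not including $w$ itself). In the paper this is applied to a random sequence $G_0=G$, $G_{i+1}=N_{v_{i+1}}(G_i)$, where the $v_i$ are chosen independently and uniformly at random from $V(G_0)$; the statement is that, conditionally on $G_i$ with average degree $\tilde d$, the number of edges decreases in expectation by at least $\binom{\tilde d+1}{2}$ when going from $G_i$ to $G_{i+1}$. *)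

From mathcomp Require Import all_boot all_order all_algebra.
Set Implicit Arguments. Unset Strict Implicit. Unset Printing Implicit Defensive.
Import Order.TTheory GRing.Theory Num.Theory.

(* A simple undirected graph H on the finite vertex set T is given by a
   symmetric irreflexive relation e : rel T. *)

Definition nbhd (T : finType) (e : rel T) (w : T) : {set T} := [set v | e w v].

Definition edges (T : finType) (e : rel T) : {set {set T}} :=
  [set A : {set T} | [exists x, exists y, e x y && (A == [set x; y])]].

Definition Nw (T : finType) (e : rel T) (w : T) : rel T :=
  fun x y => [&& e x y, x \notin nbhd e w & y \notin nbhd e w].

Definition avg_degree (R : realFieldType) (T : finType) (e : rel T) : R :=
  (\sum_(v : T) #|nbhd e v|)%:R / #|T|%:R.

Definition expected_deleted (R : realFieldType) (T : finType) (e : rel T) : R :=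
  (\sum_(w : T) ((#|edges e|)%:R - (#|edges (Nw e w)|)%:R)) / #|T|%:R.

From mathcomp Require Import all_boot all_order all_algebra ring.
Set Implicit Arguments. Unset Strict Implicit. Unset Printing Implicit Defensive.
Import Order.TTheory GRing.Theory Num.Theory.

(* Count ordered pairs instead of edges.  Twice the number of edges deleted
   from H by N_w is the number of arcs (x, y) with w adjacent to x or y.
   For a fixed arc (x, y) this holds for every w in x ∪ Γ(x), so summing
   over w gives at least Σ_x d(x) (d(x) + 1) = Σ d² + n d̃, and by
   Cauchy-Schwarz Σ d² ≥ n d̃².  Dividing by 2n gives (d̃² + d̃) / 2. *)

Lemma leq_sqr_sum (I : finType) (d : I -> nat) :
  ((\sum_i d i) ^ 2 <= #|I| * \sum_i d i ^ 2)%N.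
Proof.
have sqr_sum : ((\sum_i d i) ^ 2 = \sum_i \sum_j d i * d j)%N.
  by rewrite -mulnn big_distrl; apply: eq_bigr => i _; rewrite big_distrr.
have sum_sqr2 : (\sum_i \sum_j (d i ^ 2 + d j ^ 2) = 2 * (#|I| * \sum_i d i ^ 2))%N.
  under eq_bigr do rewrite big_split sum_nat_const /=.
  by rewrite big_split sum_nat_const -big_distrr mul2n -addnn.
rewrite sqr_sum -(leq_pmul2l (isT : (0 < 2)%N)) -sum_sqr2 big_distrr.
apply: leq_sum => i _; rewrite big_distrr; apply: leq_sum => j _.
exact: (nat_Cauchy _ _).1.
Qed.

Lemma card_set_sum (U : finType) (P : pred U) : #|[set u | P u]| = (\sum_u P u)%N.
Proof.
by rewrite -sum1_card big_mkcond; apply: eq_bigr => u _; rewrite inE; case: (P u).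
Qed.

Section Edges.

Variable T : finType.
Implicit Types (f g : rel T) (a b x y : T).

Definition arcs f : {set T * T} := [set p | f p.1 p.2].

Lemma eq_set2 a b x y : x != y ->
  ([set a; b] == [set x; y]) = ((a, b) == (x, y)) || ((a, b) == (y, x)).
Proof.
move=> xy; apply/eqP/orP => [eq_ab | [] /eqP[-> ->] //]; last by rewrite setUC.
have /set2P[] : x \in [set a; b] by rewrite eq_ab set21.
all: have /set2P[] : y \in [set a; b] by rewrite eq_ab set22.
all: move=> yE xE; move: xy; rewrite xE yE ?eqxx // => _.
all: by [left | right].
Qed.

Lemma card_set2_preimage x y : x != y ->
  #|[set p : T * T | [set p.1; p.2] == [set x; y]]| = 2.
Proof.
move=> xy; have -> : [set p : T * T | [set p.1; p.2] == [set x; y]] = [set (x, y); (y, x)].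
  by apply/setP => -[a b]; rewrite !inE eq_set2.
by rewrite cards2 xpair_eqE negb_and xy.
Qed.

Lemma card_edges f : symmetric f -> irreflexive f -> (#|edges f|).*2 = #|arcs f|.
Proof.
move=> f_sym f_irr; rewrite -muln2 -[#|arcs f|]sum1_card /arcs.
rewrite (partition_big (fun p : T * T => [set p.1; p.2]) (fun A => A \in edges f)); last first.
  case=> x y; rewrite !inE => fxy.
  by apply/existsP; exists x; apply/existsP; exists y; rewrite fxy eqxx.
rewrite -sum_nat_const; apply: eq_bigr => _ /[!inE] /existsP[x /existsP[y /andP[fxy /eqP->]]].
have xy : x != y by apply: contraTneq fxy => ->; rewrite f_irr.
rewrite -(card_set2_preimage xy) -sum1_card; apply: eq_bigl => -[a b]; rewrite !inE /=.
rewrite eq_set2 //; apply/idP/andP => [/orP[] /eqP[-> ->] | [] //]; rewrite eqxx ?orbT.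
all: by split => //; rewrite f_sym.
Qed.

Lemma edgesS f g : subrel g f -> edges g \subset edges f.
Proof.
move=> gf; apply/subsetP => A; rewrite !inE => /existsP[x /existsP[y /andP[gxy eqA]]].
by apply/existsP; exists x; apply/existsP; exists y; rewrite gf.
Qed.

Lemma card_edgesB f g : symmetric f -> irreflexive f -> symmetric g -> subrel g f ->
  (#|edges f| - #|edges g|).*2 = #|arcs f :\: arcs g|.
Proof.
move=> f_sym f_irr g_sym gf.
have g_irr : irreflexive g by move=> x; apply/negbTE/negP => /gf; rewrite f_irr.
have /setIidPr arcsS : arcs g \subset arcs f by apply/subsetP => p; rewrite !inE; apply: gf.
by rewrite doubleB !card_edges // cardsD arcsS.
Qed.

End Edges.

Section Deletion.

Variables (T : finType) (e : rel T).
Hypotheses (e_sym : symmetric e) (e_irr : irreflexive e).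

Local Notation deg x := #|nbhd e x|.

Definition deleted_arcs w : {set T * T} := [set p | e p.1 p.2 && (e w p.1 || e w p.2)].

Lemma Nw_sym w : symmetric (Nw e w).
Proof. by move=> x y; rewrite /Nw e_sym; congr (_ && _); apply: andbC. Qed.

Lemma Nw_sub w : subrel (Nw e w) e.
Proof. by move=> x y /and3P[]. Qed.

Lemma card_edges_Nw w : (#|edges (Nw e w)| <= #|edges e|)%N.
Proof. exact/subset_leq_card/edgesS/Nw_sub. Qed.

Lemma card_deleted_edges w : (#|edges e| - #|edges (Nw e w)|).*2 = #|deleted_arcs w|.
Proof.
have -> : deleted_arcs w = arcs e :\: arcs (Nw e w).
  apply/setP => p; rewrite !inE /Nw /nbhd !inE.
  by case: (e p.1 p.2) (e w p.1) (e w p.2) => [] [] [].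
exact/card_edgesB/Nw_sub/Nw_sym.
Qed.

Lemma card_arc_deleters x y : e x y -> ((deg x).+1 <= #|[set w | e w x || e w y]|)%N.
Proof.
move=> exy; have <- : #|x |: nbhd e x| = (deg x).+1 by rewrite cardsU1 /nbhd inE e_irr.
apply/subset_leq_card/subsetP => w; rewrite /nbhd !inE.
by case/orP => [/eqP-> | ]; [rewrite exy orbT | rewrite e_sym => ->].
Qed.

Lemma sum_card_deleted_arcs :
  (\sum_x deg x * (deg x).+1 <= \sum_w #|deleted_arcs w|)%N.
Proof.
have card_deleted w :
    #|deleted_arcs w| = (\sum_x \sum_y (e x y && (e w x || e w y)))%N.
  by rewrite card_set_sum pair_bigA.
under [X in (_ <= X)%N]eq_bigr do rewrite card_deleted.
rewrite exchange_big; apply: leq_sum => x _; rewrite exchange_big /=.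
rewrite {1}card_set_sum big_distrl /=; apply: leq_sum => y _.
case exy: (e x y); last by rewrite mul0n.
by rewrite mul1n -card_set_sum card_arc_deleters.
Qed.

Lemma deleted_arcs_lower_bound :
  ((\sum_x deg x + #|T|) * \sum_x deg x <= #|T| * \sum_w #|deleted_arcs w|)%N.
Proof.
set D := (\sum_x deg x)%N; rewrite mulnDl.
apply: (leq_trans (leq_add (leq_sqr_sum (fun x => deg x)) (leqnn _))).
rewrite -mulnDr leq_mul2l -big_split /=.
rewrite (leq_trans _ sum_card_deleted_arcs) ?orbT //.
by apply: leq_sum => x _; rewrite mulnS addnC mulnn.
Qed.

End Deletion.

Local Open Scope ring_scope.

Theorem lemma3p2 (R : realFieldType) (T : finType) (e : rel T)
  (e_sym : symmetric e) (e_irr : irreflexive e) (T_nonempty : (0 < #|T|)%N) :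
  (avg_degree R e + 1) * avg_degree R e / 2 <= expected_deleted R e.
Proof.
set n := #|T|; set D := (\sum_v #|nbhd e v|)%N.
set S := (\sum_w #|deleted_arcs e w|)%N.
have sum_deleted : \sum_w ((#|edges e|)%:R - (#|edges (Nw e w)|)%:R) = S%:R / 2 :> R.
  rewrite /S natr_sum mulr_suml; apply: eq_bigr => w _.
  rewrite -natrB ?card_edges_Nw // -card_deleted_edges // -muln2 natrM.
  by rewrite mulfK ?pnatr_eq0.
have n_neq0 : n%:R != 0 :> R by rewrite pnatr_eq0 -lt0n.
rewrite /avg_degree /expected_deleted sum_deleted -/n -/D.
have -> : (D%:R / n%:R + 1) * (D%:R / n%:R) / 2 = ((D + n) * D)%N%:R / (2 * n * n)%:R :> R.
  by rewrite !natrM natrD; field; rewrite n_neq0.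
have -> : S%:R / 2 / n%:R = (n * S)%N%:R / (2 * n * n)%:R :> R.
  by rewrite !natrM; field; rewrite n_neq0.
by rewrite ler_wpM2r ?invr_ge0 ?ler0n // ler_nat deleted_arcs_lower_bound.
Qed.
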